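(* Let $p\ge 3$ be a prime, $m,k\ge1$ integers, and $t,u\in\mathbb{Z}_p$ with $u\neq 0$ and $t^2\equiv u\pmod p$. Let $G$ be the set of all $m\times k$ matrices over $\mathbb{Z}_p$ with the operation $[a_{ij}]*[b_{ij}]=[(t a_{ij}+u b_{ij})\bmod p]$. Then $(G,* )$ is a $T^3$-AG-groupoid.
   Context: An AG-groupoid is a set with a binary operation satisfying $(a*b)*c=(c*b)*a$ for all $a,b,c$ (the condition $t^2\equiv u$ ensures $G$ is one). An AG-groupoid $G$ is a $T_l^3$-AG-groupoid if for all $a,b,c\in G$, $a*b=a*c$ implies $b*a=c*a$; a $T_r^3$-AG-groupoid if $b*a=c*a$ implies $a*b=a*c$; and a $T^3$-AG-groupoid if it is both. *)

From mathcomp Require Import all_boot all_algebra.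
Set Implicit Arguments. Unset Strict Implicit. Unset Printing Implicit Defensive.
Import GRing.Theory.
Local Open Scope ring_scope.

Definition AG_groupoid (G : Type) (op : G -> G -> G) : Prop :=
  forall a b c : G, op (op a b) c = op (op c b) a.

Definition T3l_AG_groupoid (G : Type) (op : G -> G -> G) : Prop :=
  AG_groupoid op /\ forall a b c : G, op a b = op a c -> op b a = op c a.

Definition T3r_AG_groupoid (G : Type) (op : G -> G -> G) : Prop :=
  AG_groupoid op /\ forall a b c : G, op b a = op c a -> op a b = op a c.

Definition T3_AG_groupoid (G : Type) (op : G -> G -> G) : Prop :=
  T3l_AG_groupoid op /\ T3r_AG_groupoid op.

Definition mat_op (p m k : nat) (t u : 'F_p) (A B : 'M['F_p]_(m, k)) : 'M['F_p]_(m, k) :=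
  \matrix_(i, j) (t * A i j + u * B i j).

From mathcomp Require Import all_boot all_algebra.
From mathcomp Require Import ring.
Local Open Scope ring_scope.
Import GRing.Theory.

(* Entrywise, (a*b)*c = t^2 a + t u b + u c and (c*b)*a = t^2 c + t u b + u a,
   which agree when t^2 = u.  Cancellation on either side only needs
   t and u to be regular, and t is regular as soon as u = t^2 is. *)

Section MatOp.

Variables (p m k : nat) (t u : 'F_p).

Lemma mat_op_AG : t ^+ 2 = u -> AG_groupoid (@mat_op p m k t u).
Proof. by move=> <- a b c; apply/matrixP => i j; rewrite !mxE expr2; ring. Qed.

Lemma mat_op_injl (a : 'M['F_p]_(m, k)) :
  GRing.lreg u -> injective (mat_op t u a).
Proof.
move=> reg_u b c /matrixP eq_bc; apply/matrixP => i j.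
by have := eq_bc i j; rewrite !mxE => /addrI /reg_u.
Qed.

Lemma mat_op_injr (a : 'M['F_p]_(m, k)) :
  GRing.lreg t -> injective (mat_op t u ^~ a).
Proof.
move=> reg_t b c /matrixP eq_bc; apply/matrixP => i j.
by have := eq_bc i j; rewrite !mxE => /addIr /reg_t.
Qed.

Lemma mat_op_T3 : t ^+ 2 = u -> GRing.lreg u -> GRing.lreg t ->
  T3_AG_groupoid (@mat_op p m k t u).
Proof.
move=> tu reg_u reg_t; have AG := mat_op_AG tu.
split; split=> // a b c.
- by move/mat_op_injl->.
- by move/mat_op_injr->.
Qed.

End MatOp.

Theorem mainTheorem5 (p m k : nat) (t u : 'F_p) :
  prime p -> (3 <= p)%N -> (1 <= m)%N -> (1 <= k)%N ->
  u != 0 -> t ^+ 2 = u ->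
  T3_AG_groupoid (@mat_op p m k t u).
Proof.
move=> _ _ _ _ u_neq0 tu.
have t_neq0 : t != 0 by apply: contraNneq u_neq0 => t0; rewrite -tu t0 expr0n.
by apply: mat_op_T3 => //; apply: mulfI.
Qed.
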